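(* Let $\mathcal{M} = (S, A, T, D, R, \gamma)$ be a Markov decision process with finite state set $S$, finite action set $A$, transition probabilities $T_{s,a}(s')$, initial-state distribution $D$, discount factor $\gamma \in (0,1)$, and reward $R(s) = \langle w^*, \phi(s)\rangle$ for a feature map $\phi\colon S \to \mathbb{R}^k$ and a unit vector $w^* \in \mathbb{R}^k$. Let $A^L\colon \mathbb{R}^k \to \mathbb{R}^\ell$ be a linear map (the learner's worldview), and let $\pi^T, \pi^L$ be two policies. Suppose that $\Vert A^L(\mu(\pi^T) - \mu(\pi^L))\Vert < \varepsilon$. Then \[ \vert \langle w^*, \mu(\pi^T) - \mu(\pi^L)\rangle \vert < \frac{\varepsilon}{\sigma(A^L)} + \rho(A^L; w^* ) \cdot \operatorname{diam} \mu(\Pi), \] where $\sigma(A^L) = \min_{v \perp \ker A^L,\ \Vert v \Vert = 1} \Vert A^L v\Vert$.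
   Context: A policy $\pi$ is a family of probability distributions $\pi_s$ on $A$ indexed by $s \in S$; $\Pi$ denotes the set of all policies. For a policy $\pi$, $\mu(\pi) = \mathbb{E}\left(\sum_{t=0}^\infty \gamma^t \phi(s_t)\right) \in \mathbb{R}^k$ is its vector of discounted feature expectations, the expectation taken over trajectories $(s_0, s_1, \dots)$ with $s_0 \sim D$, actions drawn from $\pi$ and transitions from $T$. $\operatorname{diam}\mu(\Pi) = \sup_{\mu_0,\mu_1 \in \mu(\Pi)} \Vert \mu_0 - \mu_1\Vert$, with $\Vert\cdot\Vert$ the Euclidean norm. $\ker A^L = \{v \in \mathbb{R}^k : A^L v = 0\}$. The teaching risk is $\rho(A^L; w^* ) := \max_{v \in \ker A^L,\ \Vert v \Vert \le 1} \langle w^*, v\rangle$ (equivalently, the norm of the orthogonal projection of $w^*$ onto $\ker A^L$). *)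

From HB Require Import structures.
From mathcomp Require Import all_boot all_order all_algebra.
From mathcomp Require Import all_classical all_reals.
From mathcomp Require Import topology normedtype sequences.
Set Implicit Arguments. Unset Strict Implicit. Unset Printing Implicit Defensive.
Import Order.TTheory GRing.Theory Num.Theory numFieldNormedType.Exports.
Local Open Scope ring_scope.
Local Open Scope classical_set_scope.

Section MDPDefs.
Variable R : realType.

Definition is_dist (X : finType) (f : X -> R) : Prop :=
  (forall x, 0 <= f x) /\ \sum_x f x = 1.

Definition is_policy (S A : finType) (pi : S -> A -> R) : Prop :=
  forall s, is_dist (pi s).

Definition dotv (k : nat) (u v : 'rV[R]_k) : R := \sum_(i < k) u 0 i * v 0 i.
Definition enorm (k : nat) (v : 'rV[R]_k) : R := Num.sqrt (dotv v v).

(* law of s_t: s_0 ~ D, a_t ~ pi_{s_t}, s_{t+1} ~ T_{s_t,a_t} *)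
Fixpoint state_dist (S A : finType) (T : S -> A -> S -> R) (D : S -> R)
    (pi : S -> A -> R) (t : nat) : S -> R :=
  match t with
  | 0 => D
  | t'.+1 => fun s' =>
      \sum_s state_dist T D pi t' s * \sum_a pi s a * T s a s'
  end.

Definition feat_exp (S A : finType) (k : nat) (T : S -> A -> S -> R) (D : S -> R)
    (gamma : R) (phi : S -> 'rV[R]_k) (pi : S -> A -> R) : 'rV[R]_k :=
  \row_(i < k) limn (fun n : nat => \sum_(0 <= t < n)
      (gamma ^+ t * \sum_s state_dist T D pi t s * phi s 0 i)).

Definition diam_mu (S A : finType) (k : nat) (T : S -> A -> S -> R) (D : S -> R)
    (gamma : R) (phi : S -> 'rV[R]_k) : R :=
  sup [set x : R | exists pi0 pi1 : S -> A -> R,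
         [/\ is_policy pi0, is_policy pi1 &
             x = enorm (feat_exp T D gamma phi pi0 - feat_exp T D gamma phi pi1)]].

(* the linear map A^L : R^k -> R^l is v |-> v *m AL *)
Definition in_ker (k l : nat) (AL : 'M[R]_(k, l)) (v : 'rV[R]_k) : Prop :=
  v *m AL = 0.

Definition sigmaA (k l : nat) (AL : 'M[R]_(k, l)) : R :=
  inf [set x : R | exists v : 'rV[R]_k,
         [/\ (forall u, in_ker AL u -> dotv v u = 0), enorm v = 1 &
             x = enorm (v *m AL)]].

Definition teaching_risk (k l : nat) (AL : 'M[R]_(k, l)) (w : 'rV[R]_k) : R :=
  sup [set x : R | exists v : 'rV[R]_k,
         [/\ in_ker AL v, enorm v <= 1 & x = dotv w v]].

End MDPDefs.

From HB Require Import structures.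
From mathcomp Require Import all_boot all_order all_algebra.
From mathcomp Require Import all_classical all_reals.
From mathcomp Require Import topology normedtype sequences.
From mathcomp Require Import ring.
Set Implicit Arguments. Unset Strict Implicit. Unset Printing Implicit Defensive.
Import Order.TTheory GRing.Theory Num.Theory numFieldNormedType.Exports.
Local Open Scope ring_scope.

(* Write d = mu(piT) - mu(piL) as p + q with q in ker A^L and p orthogonal to
   ker A^L (p is d A^L mapped back by the pseudo-inverse (A^T A)^+ A^T).  Then
   <w, p> <= |p| <= |p A^L| / sigma = |d A^L| / sigma < eps / sigma, while
   <w, q> <= rho |q| <= rho |d| <= rho diam mu(Pi) by Pythagoras.  sigma > 0
   because |p| <= |p A^L| times the Frobenius norm of the pseudo-inverse, and
   diam mu(Pi) is a genuine supremum since every coordinate of a feature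
   expectation is bounded by (sum_s |phi s|) / (1 - gamma). *)

Section Euclidean.
Variable R : realType.
Implicit Types (k : nat) (c : R).

Lemma dotvE k (u v : 'rV[R]_k) : dotv u v = (u *m v^T) 0 0.
Proof. by rewrite /dotv !mxE; apply: eq_bigr => i _; rewrite !mxE. Qed.

Lemma dotvC k (u v : 'rV[R]_k) : dotv u v = dotv v u.
Proof. by apply: eq_bigr => i _; rewrite mulrC. Qed.

Lemma dotvDl k (u v w : 'rV[R]_k) : dotv (u + v) w = dotv u w + dotv v w.
Proof. by rewrite !dotvE mulmxDl mxE. Qed.

Lemma dotvZl k c (u w : 'rV[R]_k) : dotv (c *: u) w = c * dotv u w.
Proof. by rewrite !dotvE -scalemxAl mxE. Qed.

Lemma dotvNl k (u w : 'rV[R]_k) : dotv (- u) w = - dotv u w.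
Proof. by rewrite -scaleN1r dotvZl mulN1r. Qed.

Lemma dotvBl k (u v w : 'rV[R]_k) : dotv (u - v) w = dotv u w - dotv v w.
Proof. by rewrite dotvDl dotvNl. Qed.

Lemma dotv0l k (w : 'rV[R]_k) : dotv 0 w = 0.
Proof. by rewrite dotvE mul0mx mxE. Qed.

Lemma dotvDr k (u v w : 'rV[R]_k) : dotv w (u + v) = dotv w u + dotv w v.
Proof. by rewrite dotvC dotvDl !(dotvC w). Qed.

Lemma dotvBr k (u v w : 'rV[R]_k) : dotv w (u - v) = dotv w u - dotv w v.
Proof. by rewrite dotvC dotvBl !(dotvC w). Qed.

Lemma dotvZr k c (u w : 'rV[R]_k) : dotv w (c *: u) = c * dotv w u.
Proof. by rewrite dotvC dotvZl dotvC. Qed.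

Lemma dotvNr k (u w : 'rV[R]_k) : dotv w (- u) = - dotv w u.
Proof. by rewrite dotvC dotvNl dotvC. Qed.

Lemma dotv0r k (w : 'rV[R]_k) : dotv w 0 = 0.
Proof. by rewrite dotvC dotv0l. Qed.

Lemma dotvv_ge0 k (v : 'rV[R]_k) : 0 <= dotv v v.
Proof. by apply: sumr_ge0 => i _; rewrite -expr2 sqr_ge0. Qed.

Lemma dotvv_eq0 k (v : 'rV[R]_k) : dotv v v = 0 -> v = 0.
Proof.
move=> /eqP; rewrite psumr_eq0 => [/allP v0|i _]; last by rewrite -expr2 sqr_ge0.
apply/rowP => i; rewrite mxE; apply/eqP.
by rewrite -sqrf_eq0 expr2; apply: v0; rewrite mem_index_enum.
Qed.

Lemma enorm_ge0 k (v : 'rV[R]_k) : 0 <= enorm v.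
Proof. exact: sqrtr_ge0. Qed.

Lemma sqr_enorm k (v : 'rV[R]_k) : enorm v ^+ 2 = dotv v v.
Proof. by rewrite sqr_sqrtr // dotvv_ge0. Qed.

Lemma enorm0 k : enorm (0 : 'rV[R]_k) = 0.
Proof. by rewrite /enorm dotv0l sqrtr0. Qed.

Lemma enorm_eq0 k (v : 'rV[R]_k) : (enorm v == 0) = (v == 0).
Proof.
apply/eqP/eqP => [v0|->]; last exact: enorm0.
by apply: dotvv_eq0; rewrite -sqr_enorm v0 expr0n.
Qed.

Lemma enorm_gt0 k (v : 'rV[R]_k) : (0 < enorm v) = (v != 0).
Proof. by rewrite lt_def enorm_eq0 enorm_ge0 andbT. Qed.

Lemma enormZ k c (v : 'rV[R]_k) : enorm (c *: v) = `|c| * enorm v.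
Proof.
by rewrite /enorm dotvZl dotvZr mulrA -expr2 sqrtrM ?sqr_ge0 // sqrtr_sqr.
Qed.

Lemma enorm_normalize k (v : 'rV[R]_k) : v != 0 -> enorm ((enorm v)^-1 *: v) = 1.
Proof.
by rewrite -enorm_gt0 => v_gt0; rewrite enormZ gtr0_norm ?invr_gt0 // mulVf ?gt_eqF.
Qed.

Lemma enormN k (v : 'rV[R]_k) : enorm (- v) = enorm v.
Proof. by rewrite /enorm dotvNl dotvNr opprK. Qed.

Lemma dotv_sqr_le k (u v : 'rV[R]_k) : dotv u v ^+ 2 <= dotv u u * dotv v v.
Proof.
have [u0|uu0] := eqVneq (dotv u u) 0.
  by rewrite (dotvv_eq0 u0) !dotv0l expr0n mul0r.
have uu_gt0 : 0 < dotv u u by rewrite lt_def uu0 dotvv_ge0.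
(* expand [0 <= |v - t u|^2] at the minimiser [t = <u,v> / <u,u>] *)
set t := dotv u v / dotv u u.
have := dotvv_ge0 (v - t *: u).
rewrite dotvBl !dotvBr !dotvZl !dotvZr (dotvC v u) => ge0.
rewrite -subr_ge0.
have -> : dotv u u * dotv v v - dotv u v ^+ 2 =
    dotv u u * (dotv v v - t * dotv u v - (t * dotv u v - t * (t * dotv u u))).
  by rewrite /t; field.
by rewrite mulr_ge0 // ltW.
Qed.

Lemma normr_dotv_le k (u v : 'rV[R]_k) : `|dotv u v| <= enorm u * enorm v.
Proof.
rewrite -(ler_pXn2r (isT : (0 < 2)%N)) ?nnegrE ?mulr_ge0 ?enorm_ge0 //.
by rewrite real_normK ?num_real // exprMn !sqr_enorm dotv_sqr_le.
Qed.

Lemma sqr_enormD_orth k (p q : 'rV[R]_k) : dotv p q = 0 ->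
  enorm (p + q) ^+ 2 = enorm p ^+ 2 + enorm q ^+ 2.
Proof.
by move=> pq0; rewrite !sqr_enorm dotvDl !dotvDr pq0 dotvC pq0 addr0 add0r.
Qed.

Lemma enorm_le_addv_orth k (p q : 'rV[R]_k) : dotv p q = 0 -> enorm q <= enorm (p + q).
Proof.
move=> pq0; rewrite -(ler_pXn2r (isT : (0 < 2)%N)) ?nnegrE ?enorm_ge0 //.
by rewrite sqr_enormD_orth // lerDr sqr_ge0.
Qed.

Lemma enorm_le_sum_norm k (v : 'rV[R]_k) : enorm v <= \sum_i `|v 0 i|.
Proof.
rewrite -(ler_pXn2r (isT : (0 < 2)%N)) ?nnegrE ?enorm_ge0 ?sumr_ge0 //.
rewrite sqr_enorm /dotv expr2 mulr_suml; apply: ler_sum => i _.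
have -> : v 0 i * v 0 i = `|v 0 i| * `|v 0 i|.
  by rewrite -normrM ger0_norm // -expr2 sqr_ge0.
by rewrite ler_wpM2l // (bigD1 i) //= lerDl sumr_ge0.
Qed.

Definition frobenius k l (M : 'M[R]_(l, k)) : R :=
  Num.sqrt (\sum_j dotv (row j M^T) (row j M^T)).

Lemma frobenius_ge0 k l (M : 'M[R]_(l, k)) : 0 <= frobenius M.
Proof. exact: sqrtr_ge0. Qed.

Lemma enorm_mulmx_le k l (x : 'rV[R]_l) (M : 'M[R]_(l, k)) :
  enorm (x *m M) <= enorm x * frobenius M.
Proof.
have F0 : 0 <= \sum_j dotv (row j M^T) (row j M^T).
  by rewrite sumr_ge0 // => j _; apply: dotvv_ge0.
rewrite -(ler_pXn2r (isT : (0 < 2)%N)) ?nnegrE ?mulr_ge0 ?enorm_ge0 ?frobenius_ge0 //.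
rewrite exprMn !sqr_enorm /frobenius (sqr_sqrtr F0) mulr_sumr; apply: ler_sum => j _.
have -> : (x *m M) 0 j * (x *m M) 0 j = dotv x (row j M^T) ^+ 2.
  by rewrite expr2 !mxE; congr (_ * _); apply: eq_bigr => i _; rewrite !mxE.
exact: dotv_sqr_le.
Qed.

End Euclidean.

Section KernelComplement.
Variables (R : realType) (k l : nat) (A : 'M[R]_(k, l)).

Definition perp_ker (v : 'rV[R]_k) : Prop := forall u, in_ker A u -> dotv v u = 0.

Lemma mul_trmx_mulmx_eq0 (y : 'rV[R]_l) : y *m (A^T *m A) = 0 -> y *m A^T = 0.
Proof.
move=> yAtA0; apply: dotvv_eq0.
by rewrite dotvE trmx_mul trmxK mulmxA -(mulmxA y) yAtA0 mul0mx mxE.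
Qed.

Lemma mxrank_trmx_mul : \rank (A^T *m A) = \rank A.
Proof.
have /eqmxP ker_eq : (kermx (A^T *m A) == kermx A^T)%MS.
  rewrite !sub_kermx mulmxA mulmx_ker mul0mx eqxx andbT.
  apply/eqP/row_matrixP => i; rewrite row_mul row0.
  by apply: mul_trmx_mulmx_eq0; rewrite -row_mul mulmx_ker row0.
have := mxrank_ker (A^T *m A); rewrite ker_eq mxrank_ker => /(congr1 (subn l)).
by rewrite !subKn ?rank_leq_row // mxrank_tr.
Qed.

Lemma submx_trmx_mul : (A <= A^T *m A)%MS.
Proof.
have := (mxrank_leqif_eq (submxMl A^T A)).2.
by rewrite mxrank_trmx_mul eqxx => /esym/andP[].
Qed.

(* [d *m A *m orth_pinv] is the component of [d] orthogonal to [ker A]. *)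
Definition orth_pinv : 'M[R]_(l, k) := pinvmx (A^T *m A) *m A^T.

Lemma mulmx_orth_pinvK (d : 'rV[R]_k) : d *m A *m orth_pinv *m A = d *m A.
Proof.
have := mulmxKpV (submx_trans (submxMl d A) submx_trmx_mul).
by rewrite /orth_pinv !mulmxA.
Qed.

Lemma perp_ker_orth_pinv (x : 'rV[R]_l) : perp_ker (x *m orth_pinv).
Proof.
by move=> u uA0; rewrite dotvE /orth_pinv -!mulmxA -trmx_mul uA0 trmx0 !mulmx0 mxE.
Qed.

Lemma perp_ker_orth_pinvK (v : 'rV[R]_k) : perp_ker v -> v *m A *m orth_pinv = v.
Proof.
move=> vperp.
have ker_vp : in_ker A (v - v *m A *m orth_pinv).
  by rewrite /in_ker mulmxBl mulmx_orth_pinvK subrr.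
apply/esym/subr0_eq/dotvv_eq0.
by rewrite dotvBl (vperp _ ker_vp) (perp_ker_orth_pinv _ ker_vp) subrr.
Qed.

Lemma ker_orth_decomposition (d : 'rV[R]_k) :
  exists p q, [/\ d = p + q, perp_ker p, in_ker A q & p *m A = d *m A].
Proof.
exists (d *m A *m orth_pinv), (d - d *m A *m orth_pinv).
split; [by rewrite addrC subrK | exact: perp_ker_orth_pinv | | exact: mulmx_orth_pinvK].
by rewrite /in_ker mulmxBl mulmx_orth_pinvK subrr.
Qed.

End KernelComplement.


Section SingularValue.
Variables (R : realType) (k l : nat) (A : 'M[R]_(k, l)).

Lemma perp_kerZ c (v : 'rV[R]_k) : perp_ker A v -> perp_ker A (c *: v).
Proof. by move=> vperp u uA0; rewrite dotvZl vperp ?mulr0. Qed.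

Lemma enorm_perp_ker_le (v : 'rV[R]_k) : perp_ker A v ->
  enorm v <= enorm (v *m A) * frobenius (orth_pinv A).
Proof.
by move=> vperp; rewrite -{1}(perp_ker_orth_pinvK vperp) enorm_mulmx_le.
Qed.

Lemma sigmaA_gt0 : A != 0 -> 0 < sigmaA A.
Proof.
move=> A0; rewrite /sigmaA; set E := (X in inf X); set F := frobenius (orth_pinv A).
have E_lb y : E y -> 1 <= y * F.
  by case=> v [vperp v1 ->]; rewrite -v1 enorm_perp_ker_le.
have [i Ai0] : exists i, row i A != 0.
  apply/existsP; apply: contraNT A0 => /existsPn Arow0.
  by apply/eqP/row_matrixP => i; rewrite row0; apply/eqP/negbNE.
pose p := (delta_mx 0 i : 'rV[R]_k) *m A *m orth_pinv A.
have pA : p *m A = row i A by rewrite mulmx_orth_pinvK -rowE.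
have p0 : p != 0 by apply: contraNneq Ai0 => p0; rewrite -pA p0 mul0mx.
have Ey : E (enorm ((enorm p)^-1 *: p *m A)).
  exists ((enorm p)^-1 *: p); split=> //; last exact: enorm_normalize.
  exact/perp_kerZ/perp_ker_orth_pinv.
have F_gt0 : 0 < F.
  rewrite lt_def frobenius_ge0 andbT; apply: contraTneq (E_lb _ Ey) => ->.
  by rewrite mulr0 ler10.
apply: (@lt_le_trans _ _ F^-1); first by rewrite invr_gt0.
apply: lb_le_inf; first by exists (enorm ((enorm p)^-1 *: p *m A)).
by move=> y /E_lb; rewrite -ler_pdivrMr // mul1r.
Qed.

Lemma sigmaA_mul_le (v : 'rV[R]_k) :
  perp_ker A v -> sigmaA A * enorm v <= enorm (v *m A).
Proof.
move=> vperp; have [->|v0] := eqVneq v 0; first by rewrite enorm0 mulr0 enorm_ge0.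
have v_gt0 : 0 < enorm v by rewrite enorm_gt0.
rewrite -ler_pdivlMr // mulrC.
have -> : (enorm v)^-1 * enorm (v *m A) = enorm ((enorm v)^-1 *: v *m A).
  by rewrite -scalemxAl enormZ gtr0_norm ?invr_gt0.
apply: ge_inf; first by exists 0 => y [u [_ _ ->]]; apply: enorm_ge0.
by exists ((enorm v)^-1 *: v); split=> //; [exact: perp_kerZ | exact: enorm_normalize].
Qed.

End SingularValue.

Section TeachingRisk.
Variables (R : realType) (k l : nat) (A : 'M[R]_(k, l)) (w : 'rV[R]_k).

Lemma teaching_risk_ub (v : 'rV[R]_k) :
  in_ker A v -> enorm v <= 1 -> dotv w v <= teaching_risk A w.
Proof.
move=> vA0 v1; apply: sup_upper_bound; last by exists v; split.
split; first by exists (dotv w v), v; split.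
exists (enorm w) => _ [u [_ u1 ->]]; apply: le_trans (ler_norm _) _.
by apply: le_trans (normr_dotv_le _ _) _; rewrite ler_piMr ?enorm_ge0.
Qed.

Lemma in_ker0 : in_ker A 0.
Proof. exact: mul0mx. Qed.

Lemma teaching_risk_ge0 : 0 <= teaching_risk A w.
Proof. by have := teaching_risk_ub in_ker0; rewrite enorm0 dotv0r; apply. Qed.

Lemma dotv_ker_le (q : 'rV[R]_k) :
  in_ker A q -> dotv w q <= teaching_risk A w * enorm q.
Proof.
move=> qA0; have [->|q0] := eqVneq q 0; first by rewrite dotv0r enorm0 mulr0.
have q_gt0 : 0 < enorm q by rewrite enorm_gt0.
rewrite -ler_pdivrMr // mulrC -dotvZr teaching_risk_ub ?enorm_normalize //.
by rewrite /in_ker -scalemxAl qA0 scaler0.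
Qed.

Lemma normr_dotv_ker_le (q : 'rV[R]_k) :
  in_ker A q -> `|dotv w q| <= teaching_risk A w * enorm q.
Proof.
move=> qA0; rewrite ler_norml dotv_ker_le // andbT lerNl -dotvNr -enormN.
by rewrite dotv_ker_le // /in_ker mulNmx qA0 oppr0.
Qed.

End TeachingRisk.

(* A divergent [u] has [limn u = 0], still bounded by [`|u 0|]. *)
Lemma normr_limn_le (R : realType) (u : R^nat) (B : R) :
  (forall n, `|u n| <= B) -> `|limn u| <= B.
Proof.
move=> uB; have [cvu|dvu] := pselect (cvgn u); last first.
  by rewrite (dvgP dvu) normr0 (le_trans _ (uB 0%N)).
have {}uB n : - B <= u n <= B by rewrite -ler_norml.
rewrite ler_norml; apply/andP; split.
  by apply: limr_ge => //; apply: nearW => n; case/andP: (uB n).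
by apply: limr_le => //; apply: nearW => n; case/andP: (uB n).
Qed.

Section FeatureExpectations.
Variables (R : realType) (S A : finType) (T : S -> A -> S -> R) (D : S -> R).
Hypotheses (T_dist : forall s a, is_dist (T s a)) (D_dist : is_dist D).

Lemma state_dist_is_dist (pi : S -> A -> R) t :
  is_policy pi -> is_dist (state_dist T D pi t).
Proof.
move=> pi_dist; elim: t => [|t [sd_ge0 sd_sum1]] //=; split.
  move=> s'; apply: sumr_ge0 => s _; apply: mulr_ge0 => //.
  by apply: sumr_ge0 => a _; apply: mulr_ge0; [case: (pi_dist s) | case: (T_dist s a)].
rewrite exchange_big /= -sd_sum1; apply: eq_bigr => s _.
rewrite -mulr_sumr exchange_big /= -[RHS]mulr1 -(pi_dist s).2; congr (_ * _).
by apply: eq_bigr => a _; rewrite -mulr_sumr (T_dist s a).2 mulr1.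
Qed.

Variables (gamma : R) (k : nat) (phi : S -> 'rV[R]_k).
Hypothesis gamma01 : 0 < gamma < 1.

Lemma normr_feat_exp_le (pi : S -> A -> R) i : is_policy pi ->
  `|feat_exp T D gamma phi pi 0 i| <= (\sum_s `|phi s 0 i|) / (1 - gamma).
Proof.
move=> pi_dist; rewrite mxE; apply: normr_limn_le => n.
have [gamma_gt0 gamma_lt1] := andP gamma01.
set c := \sum_s `|phi s 0 i|.
have avg_le t : `|\sum_s state_dist T D pi t s * phi s 0 i| <= c.
  have [sd_ge0 sd_sum1] := state_dist_is_dist t pi_dist.
  apply: le_trans (ler_norm_sum _ _ _) _; apply: ler_sum => s _.
  rewrite normrM ger0_norm // ler_piMl // -sd_sum1.
  by rewrite (bigD1 s) //= lerDl sumr_ge0.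
apply: le_trans (ler_norm_sum _ _ _) _.
have c_ge0 : 0 <= c by apply: sumr_ge0.
have gamma_norm_lt1 : `|gamma| < 1 by rewrite gtr0_norm.
apply: le_trans (geometric_le_lim n c_ge0 gamma_gt0 gamma_norm_lt1).
rewrite /series /=; apply: ler_sum => t _.
have gammat_ge0 : 0 <= gamma ^+ t by rewrite exprn_ge0 // ltW.
by rewrite normrM ger0_norm // mulrC ler_wpM2r.
Qed.

Lemma enorm_feat_exp_sub_le_diam (pi0 pi1 : S -> A -> R) :
  is_policy pi0 -> is_policy pi1 ->
  enorm (feat_exp T D gamma phi pi0 - feat_exp T D gamma phi pi1)
    <= diam_mu T D gamma phi.
Proof.
move=> pi0_dist pi1_dist; apply: sup_upper_bound; last by exists pi0, pi1; split.
split; first by eexists; exists pi0, pi1; split.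
exists (\sum_i ((\sum_s `|phi s 0 i|) / (1 - gamma) *+ 2)).
move=> _ [rho0 [rho1 [rho0_dist rho1_dist ->]]].
apply: le_trans (enorm_le_sum_norm _) _; apply: ler_sum => i _.
have := normr_feat_exp_le i rho0_dist; have := normr_feat_exp_le i rho1_dist.
rewrite !mxE mulr2n => rho1_le rho0_le.
by apply: le_trans (ler_normB _ _) _; rewrite lerD.
Qed.

End FeatureExpectations.

Theorem theorem1 (R : realType) (S A : finType) (k l : nat)
    (T : S -> A -> S -> R) (D : S -> R) (gamma : R)
    (phi : S -> 'rV[R]_k) (w : 'rV[R]_k) (AL : 'M[R]_(k, l))
    (piT piL : S -> A -> R) (eps : R) :
  (forall s a, is_dist (T s a)) ->
  is_dist D ->
  0 < gamma < 1 ->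
  enorm w = 1 ->
  AL != 0 ->
  is_policy piT -> is_policy piL ->
  enorm ((feat_exp T D gamma phi piT - feat_exp T D gamma phi piL) *m AL) < eps ->
  `| dotv w (feat_exp T D gamma phi piT - feat_exp T D gamma phi piL) |
    < eps / sigmaA AL + teaching_risk AL w * diam_mu T D gamma phi.
Proof.
move=> T_dist D_dist gamma01 w1 AL0 piT_dist piL_dist.
set d := _ - _ => dAL_lt.
have [p [q [dpq p_perp q_ker pAL]]] := ker_orth_decomposition AL d.
have p_lt : enorm p < eps / sigmaA AL.
  rewrite ltr_pdivlMr ?sigmaA_gt0 // mulrC.
  by apply: le_lt_trans dAL_lt; rewrite -pAL sigmaA_mul_le.
have q_le : enorm q <= diam_mu T D gamma phi.
  have d_le := enorm_feat_exp_sub_le_diam T_dist D_dist phi gamma01 piT_dist piL_dist.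
  apply: le_trans d_le.
  by rewrite -/d dpq enorm_le_addv_orth ?p_perp.
rewrite dpq dotvDr; apply: le_lt_trans (ler_normD _ _) _; apply: ltr_leD.
  by apply: le_lt_trans p_lt; rewrite (le_trans (normr_dotv_le _ _)) // w1 mul1r.
by apply: le_trans (normr_dotv_ker_le w q_ker) _; rewrite ler_wpM2l ?teaching_risk_ge0.
Qed.
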